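(* Let $(R,\mathfrak m,k)$ be a one-dimensional analytically irreducible local domain with canonical map $k\to\overline R/\mathfrak n$ an isomorphism, with $v,a_i,n,I_i,\mathcal T(R)$ as in the context. Let $n\ge 4$ and $1\le i\le n-3$, and take $q,q'\in R$ with $v(q)=a_i$, $v(q')=a_{i+1}$. For $\alpha\in R$ put $J_\alpha^{(i)}=(q+\alpha q')+I_{i+2}$. Assume $I_iI_{i+2}\ne qI_{i+2}$ and $I_{i+1}I_{i+3}=q'I_{i+3}$. Then: (1) $J^{(i)}_\alpha\in\mathcal T(R)$ for every $\alpha\in R$; (2) if $\alpha,\beta\in R$ with $\alpha-\beta\notin\mathfrak m$, then $J^{(i)}_\alpha\not\supseteq J^{(i)}_\beta$; (3) if $k$ is infinite, then $\mathcal T(R)$ is an infinite set.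
   Context: $\overline R$ is the integral closure of $R$ in $Q(R)$, assumed finitely generated over $R$ and local with maximal ideal $\mathfrak n$; $v$ is the normalized valuation of $\overline R$; $v(R)=\{a_0=0<a_1<\cdots\}$; $n$ is the smallest integer with $a_{n+j}=a_n+j$ for all $j\ge 0$; $I_j=\{r\in R\mid v(r)\ge a_j\}$ for $0\le j\le n$. $\mathcal T(R)$ is the set of nonzero trace ideals of $R$, where a trace ideal is one of the form $\sum_{f\in\mathrm{Hom}_R(M,R)}\mathrm{Im}f$ for some module $M$. *)

From HB Require Import structures.
From mathcomp Require Import all_boot all_order all_algebra fraction.
Set Implicit Arguments. Unset Strict Implicit. Unset Printing Implicit Defensive.
Import Order.TTheory GRing.Theory Num.Theory.
Local Open Scope ring_scope.

Section Defs.
Variable R : idomainType.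

Definition emb (r : R) : {fraction R} := @FracField.tofrac R r.

Definition is_ideal (I : R -> Prop) : Prop :=
  I 0 /\ (forall x y, I x -> I y -> I (x + y)) /\ (forall r x, I x -> I (r * x)).

Definition is_prime_ideal (P : R -> Prop) : Prop :=
  is_ideal P /\ ~ P 1 /\ (forall x y, P (x * y) -> P x \/ P y).

Definition strict_sub (P Q : R -> Prop) : Prop :=
  (forall x, P x -> Q x) /\ exists x, Q x /\ ~ P x.

Definition krull_dim_one : Prop :=
  (exists P Q, is_prime_ideal P /\ is_prime_ideal Q /\ strict_sub P Q) /\
  ~ (exists P Q S, is_prime_ideal P /\ is_prime_ideal Q /\ is_prime_ideal S /\
        strict_sub P Q /\ strict_sub Q S).

Definition fin_gen_ideal (I : R -> Prop) : Prop :=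
  exists s : seq R, forall x,
    I x <-> exists c : 'I_(size s) -> R, x = \sum_(j < size s) c j * s`_j.

Definition noetherian : Prop := forall I, is_ideal I -> fin_gen_ideal I.

(* local ring: the non-units form an ideal (the maximal ideal m) *)
Definition max_ideal (x : R) : Prop := x \isn't a GRing.unit.
Definition is_local : Prop := is_ideal max_ideal.

Definition Rbar (z : {fraction R}) : Prop :=
  exists p : {poly R}, p \is monic /\ root (map_poly emb p) z.

Definition Rbar_fin_gen : Prop :=
  exists s : seq {fraction R}, forall z,
    Rbar z <-> exists c : 'I_(size s) -> R,
                 z = \sum_(j < size s) emb (c j) * s`_j.

(* v is the normalized (discrete, surjective onto Z) valuation of Q(R) whose
   valuation ring is Rbar; its values on 0 are irrelevant (v 0 = oo). *)
Definition normalized_valuation_of_Rbar (v : {fraction R} -> int) : Prop :=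
  (forall x y, x != 0 -> y != 0 -> v (x * y) = v x + v y) /\
  (forall x y, x != 0 -> y != 0 -> x + y != 0 -> Order.min (v x) (v y) <= v (x + y)) /\
  (forall z, z != 0 -> (Rbar z <-> 0 <= v z)) /\
  (exists t, t != 0 /\ v t = 1).

Definition nbar (v : {fraction R} -> int) (z : {fraction R}) : Prop :=
  z = 0 \/ 0 < v z.

(* canonical map k = R/m -> Rbar/n is an isomorphism (injective & surjective) *)
Definition residue_iso (v : {fraction R} -> int) : Prop :=
  (forall r : R, nbar v (emb r) <-> max_ideal r) /\
  (forall z, Rbar z -> exists r : R, nbar v (z - emb r)).

Definition residue_field_infinite : Prop :=
  exists f : nat -> R, forall i j, i <> j -> ~ max_ideal (f i - f j).

Definition value_enum (v : {fraction R} -> int) (a : nat -> int) : Prop :=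
  (forall j, a j < a j.+1) /\
  (forall x, (exists r : R, r != 0 /\ v (emb r) = x) <-> exists j, x = a j).

Definition conductor_index (a : nat -> int) (n : nat) : Prop :=
  (forall j, a (n + j)%N = a n + j%:Z) /\
  (forall n', (n' < n)%N -> ~ (forall j, a (n' + j)%N = a n' + j%:Z)).

Definition Iv (v : {fraction R} -> int) (a : nat -> int) (j : nat) (r : R) : Prop :=
  r = 0 \/ a j <= v (emb r).

Definition ideal_mul (I J : R -> Prop) (x : R) : Prop :=
  exists s : seq (R * R), (forall p, p \in s -> I p.1 /\ J p.2) /\
    x = \sum_(p <- s) p.1 * p.2.

Definition scal_ideal (q : R) (I : R -> Prop) (x : R) : Prop :=
  exists y, I y /\ x = q * y.

Definition gen_plus (g : R) (I : R -> Prop) (x : R) : Prop :=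
  exists r y, I y /\ x = r * g + y.

Definition set_eq (I J : R -> Prop) : Prop := forall x, I x <-> J x.
Definition set_sub (I J : R -> Prop) : Prop := forall x, I x -> J x.

(* trace of an R-module M: sum of the images of all f in Hom_R(M, R) *)
Definition trace_of (M : lmodType R) (x : R) : Prop :=
  exists s : seq ({linear M -> R^o} * M), x = \sum_(p <- s) p.1 p.2.

Definition in_TR (I : R -> Prop) : Prop :=
  (exists x, I x /\ x != 0) /\ exists M : lmodType R, set_eq I (trace_of M).

Definition TR_infinite : Prop :=
  exists f : nat -> (R -> Prop),
    (forall j, in_TR (f j)) /\ (forall j l, j <> l -> ~ set_eq (f j) (f l)).

End Defs.

(* A homomorphism J -> R is multiplication by some z in Q(R), so J is a trace ideal as soon
   as z J <= R forces z J <= J.  For J = (g) + I_(i+2) with g = q + alpha q', such a z lies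
   in Rbar (by the conductor), hence z = c + z1 with c in R and v z1 > 0, and z g can only
   miss J when v (z1 g) = a_(i+1).  Such a z1 is an obstruction: since units of Rbar that
   map I_m into R preserve I_m, and I_(i+1) I_(i+3) = q' I_(i+3), it makes g and then q
   divide I_i I_(i+2) inside I_(i+2), i.e. I_i I_(i+2) = q I_(i+2), which is excluded.
   If J_beta <= J_alpha with alpha - beta a unit, writing q + beta q' = r g + y exhibits
   the obstruction z1 = 1 - r for g = q.  Representatives of distinct residue classes then
   give infinitely many distinct J_alpha. *)

From HB Require Import structures.
From mathcomp Require Import all_boot all_order all_algebra fraction.
From mathcomp Require Import generic_quotient zify ring boolp.
Import Order.TTheory GRing.Theory Num.Theory Order.NatMonotonyTheory.
Set Implicit Arguments. Unset Strict Implicit. Unset Printing Implicit Defensive.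
Local Open Scope ring_scope.

Section Embedding.
Variable R : idomainType.

Lemma emb0 : emb 0 = 0 :> {fraction R}. Proof. exact: tofrac0. Qed.
Lemma embD : {morph @emb R : x y / x + y}. Proof. exact: tofracD. Qed.
Lemma embN : {morph @emb R : x / - x}. Proof. exact: tofracN. Qed.
Lemma embB : {morph @emb R : x y / x - y}. Proof. exact: tofracB. Qed.
Lemma embM : {morph @emb R : x y / x * y}. Proof. exact: tofracM. Qed.

Lemma embV (x : R) : x \is a GRing.unit -> emb x^-1 = (emb x)^-1.
Proof. exact: rmorphV. Qed.

Lemma emb_eq0 (x : R) : (emb x == 0) = (x == 0).
Proof. exact: tofrac_eq0. Qed.

Lemma emb_inj : injective (@emb R).
Proof. by move=> x y /eqP; rewrite tofrac_eq => /eqP. Qed.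

End Embedding.

Definition in_R (R : idomainType) (x : {fraction R}) : Prop := exists r : R, emb r = x.

Definition colon (R : idomainType) (J : R -> Prop) (z : {fraction R}) : Prop :=
  forall y, J y -> in_R (z * emb y).

Section Valuation.
Variables (R : idomainType) (v : {fraction R} -> int).
Hypothesis Hv : normalized_valuation_of_Rbar v.
Local Notation F := {fraction R}.

Lemma valuationM (x y : F) : x != 0 -> y != 0 -> v (x * y) = v x + v y.
Proof. exact: (proj1 Hv). Qed.

Lemma valuation1 : v 1 = 0.
Proof.
have := valuationM (oner_neq0 F) (oner_neq0 F); rewrite mulr1 => v11.
by apply: (addrI (v 1)); rewrite addr0 -v11.
Qed.

Lemma valuationN (x : F) : x != 0 -> v (- x) = v x.
Proof.
have N10 : (-1 : F) != 0 by rewrite oppr_eq0 oner_neq0.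
have vN1 : v (-1) = 0 by have := valuationM N10 N10; rewrite mulrNN mulr1 valuation1; lia.
by move=> x0; rewrite -mulN1r valuationM // vN1 add0r.
Qed.

Lemma valuation_div (x y : F) : x != 0 -> y != 0 -> v (x / y) = v x - v y.
Proof.
move=> x0 y0; have yV0 : y^-1 != 0 by rewrite invr_neq0.
have := valuationM y0 yV0; rewrite mulfV // valuation1 valuationM // => vyV; lia.
Qed.

Lemma valuation_add_ge (x y : F) c : x != 0 -> y != 0 -> x + y != 0 ->
  c <= v x -> c <= v y -> c <= v (x + y).
Proof.
move=> x0 y0 xy0 cx cy; apply: le_trans (proj1 (proj2 Hv) x y x0 y0 xy0).
by rewrite le_min cx cy.
Qed.

Lemma valuation_add_dominant (x y : F) : x != 0 -> (y = 0 \/ v x < v y) ->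
  x + y != 0 /\ v (x + y) = v x.
Proof.
move=> x0 [->|vxy]; first by rewrite addr0.
have [->|y0] := eqVneq y 0; first by rewrite addr0.
have xy0 : x + y != 0.
  apply: contra_ltN vxy => /eqP xy0.
  by rewrite -(addKr x y) xy0 addr0 valuationN.
split=> //; apply/eqP; rewrite eq_le (valuation_add_ge x0 y0 xy0 (lexx _) (ltW vxy)) andbT.
have Ny0 : - y != 0 by rewrite oppr_eq0.
have := proj1 (proj2 Hv) (x + y) (- y) xy0 Ny0; rewrite addrK valuationN // => /(_ x0).
by rewrite ge_min [v y <= _]leNgt vxy orbF.
Qed.

Lemma Rbar_valuation (z : F) : z != 0 -> Rbar z <-> 0 <= v z.
Proof. exact: (proj1 (proj2 (proj2 Hv))). Qed.

Lemma Rbar_emb (r : R) : Rbar (emb r).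
Proof.
exists ('X - r%:P); split; first exact: monicXsubC.
by rewrite /emb map_polyXsubC rootE hornerXsubC subrr.
Qed.

Lemma valuation_emb_ge0 (r : R) : r != 0 -> 0 <= v (emb r).
Proof. by move=> r0; apply/(Rbar_valuation _).1; [rewrite emb_eq0 | exact: Rbar_emb]. Qed.

End Valuation.

Lemma fraction_num_den (R : idomainType) (x : {fraction R}) :
  exists a b : R, b != 0 /\ x = emb a / emb b.
Proof.
elim/quotW: x => r; exists (\n_r), (\d_r); split; first exact: denom_ratioP.
have d0 : emb (\d_r) != 0 by rewrite emb_eq0 denom_ratioP.
apply: (mulIf d0); rewrite mulfVK //; unlock emb FracField.tofrac.
rewrite -[_ * _]/(FracField.mul _ _) -FracField.pi_mul; apply/eqmodP.
rewrite /= FracField.equivfE /FracField.mulf /=.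
rewrite !numden_Ratio ?oner_neq0 ?mulf_neq0 ?denom_ratioP ?oner_neq0 //.
by rewrite !mulr1 mulrC.
Qed.

Lemma common_denominator (R : idomainType) (s : seq {fraction R}) :
  exists2 D : R, D != 0 & forall j, (j < size s)%N -> in_R (emb D * s`_j).
Proof.
elim: s => [|x s [D D0 HD]]; first by exists 1; rewrite ?oner_neq0.
have [a [b [b0 ->]]] := fraction_num_den x.
exists (b * D) => [|[_|j]] /=; first by rewrite mulf_neq0.
  by exists (D * a); rewrite !embM mulrAC mulrCA mulfV ?emb_eq0 // mulr1 mulrC.
by move=> /HD [r Er]; exists (b * r); rewrite !embM Er mulrA.
Qed.

Lemma Rbar_conductor (R : idomainType) (v : {fraction R} -> int) :
  normalized_valuation_of_Rbar v -> Rbar_fin_gen R ->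
  exists e, forall w, w != 0 -> e <= v w -> in_R w.
Proof.
move=> Hv [s Hs]; have [D D0 HD] := common_denominator s.
have eD0 : emb D != 0 by rewrite emb_eq0.
exists (v (emb D)) => w w0 le_Dw.
have wD0 : w / emb D != 0 by rewrite mulf_neq0 ?invr_neq0.
have /Hs [c Ec] : Rbar (w / emb D) by apply/(Rbar_valuation Hv wD0); rewrite valuation_div //; lia.
rewrite -(mulfVK eD0 w) Ec mulr_suml; apply: (big_ind (@in_R R)).
- by exists 0; rewrite emb0.
- by move=> _ _ [x <-] [y <-]; exists (x + y); rewrite embD.
move=> j _; have [r Er] := HD j (ltn_ord j).
by exists (c j * r); rewrite embM Er [emb D * _]mulrC mulrA.
Qed.

Section ValueSemigroup.
Variables (R : idomainType) (v : {fraction R} -> int) (a : nat -> int).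
Hypothesis Hv : normalized_valuation_of_Rbar v.
Hypothesis Hres : residue_iso v.
Hypothesis Ha : value_enum v a.
Local Notation F := {fraction R}.

Lemma value_le : {mono a : j k / (j <= k)%N >-> j <= k}.
Proof. exact/le_mono/homo_ltn_lt/(proj1 Ha). Qed.

Lemma value_lt : {mono a : j k / (j < k)%N >-> j < k}.
Proof. exact/leW_mono/value_le. Qed.

Lemma value_attained (r : R) : r != 0 -> exists j, v (emb r) = a j.
Proof. by move=> r0; apply/(proj2 Ha); exists r. Qed.

Lemma value_exists j : exists2 r : R, r != 0 & v (emb r) = a j.
Proof. by have [r [r0 vr]] := (proj2 Ha (a j)).2 (ex_intro _ j erefl); exists r. Qed.

Lemma value_gap (r : R) k : r != 0 -> a k < v (emb r) -> a k.+1 <= v (emb r).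
Proof. by move=> r0; have [j ->] := value_attained r0; rewrite value_lt value_le. Qed.

Lemma valuation0_unit (r : R) : r != 0 -> v (emb r) = 0 -> r \is a GRing.unit.
Proof.
move=> r0 vr0; apply/negPn/negP => /(proj1 Hres r).2 [/eqP|].
  by rewrite emb_eq0 (negbTE r0).
by rewrite vr0 ltxx.
Qed.

Lemma unit_valuation (r : R) : r \is a GRing.unit -> r != 0 /\ v (emb r) = 0.
Proof.
move=> ur; have r0 : r != 0 by apply: contraTneq ur => ->; rewrite unitr0.
split=> //; apply/eqP; rewrite eq_le valuation_emb_ge0 // andbT leNgt.
apply/negP => vr_gt0; suff : max_ideal r by rewrite /max_ideal ur.
by apply/(proj1 Hres r).1; right.
Qed.

Lemma residue_decomposition (z : F) : z != 0 -> 0 <= v z ->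
  exists c : R, z = emb c \/ (z - emb c != 0 /\ 0 < v (z - emb c)).
Proof.
move=> z0 vz; have [c [/eqP|zc_gt0]] := (proj2 Hres) z ((Rbar_valuation Hv z0).2 vz).
  by rewrite subr_eq0 => /eqP zc; exists c; left.
exists c; have [/eqP|zc0] := eqVneq (z - emb c) 0; last by right.
by rewrite subr_eq0 => /eqP; left.
Qed.

End ValueSemigroup.

Lemma gen_plus_ideal (R : idomainType) (g : R) (I : R -> Prop) :
  is_ideal I -> is_ideal (gen_plus g I).
Proof.
move=> [I0 [ID IM]]; split; first by exists 0, 0; rewrite mul0r addr0.
split=> [x y [r [y1 [Iy1 ->]]] [s [y2 [Iy2 ->]]] | r x [s [y [Iy ->]]]].
  by exists (r + s), (y1 + y2); rewrite mulrDl addrACA; split; first exact: ID.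
by exists (r * s), (r * y); rewrite mulrDr mulrA; split; first exact: IM.
Qed.

Lemma divf_perturb (K : fieldType) (y c w : K) : w != 0 -> c != 0 ->
  y / w = y / c - (w - c) * (y / c) / w.
Proof. by move=> w0 c0; field; rewrite w0 c0. Qed.

Section ValuationIdeals.
Variables (R : idomainType) (v : {fraction R} -> int) (a : nat -> int).
Hypothesis Hv : normalized_valuation_of_Rbar v.
Hypothesis Hres : residue_iso v.
Hypothesis Ha : value_enum v a.
Local Notation F := {fraction R}.
Local Notation I := (Iv v a).

Lemma Iv_valuation m r : r != 0 -> I m r -> a m <= v (emb r).
Proof. by move=> r0 [/eqP|//]; rewrite (negbTE r0). Qed.

Lemma Iv_ideal m : is_ideal (I m).
Proof.
split; [by left | split].
  move=> x y Ix Iy; have [->|y0] := eqVneq y 0; first by rewrite addr0.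
  have [->|x0] := eqVneq x 0; first by rewrite add0r.
  have [->|xy0] := eqVneq (x + y) 0; [by left | right].
  rewrite embD; apply: (valuation_add_ge Hv); rewrite -?embD ?emb_eq0 //; exact: Iv_valuation.
move=> r x Ix; have [->|r0] := eqVneq r 0; first by rewrite mul0r; left.
have [->|x0] := eqVneq x 0; first by rewrite mulr0; left.
right; rewrite embM (valuationM Hv) ?emb_eq0 //.
by have := valuation_emb_ge0 Hv r0; have := Iv_valuation x0 Ix; lia.
Qed.

Lemma Iv_split k (g x : R) : g != 0 -> v (emb g) = a k -> I k x ->
  exists u x1, x = u * g + x1 /\ I k.+1 x1.
Proof.
move=> g0 vg Ix; have [->|x0] := eqVneq x 0.
  by exists 0, 0; rewrite mul0r addr0; split; last left.
have [vx_gt|vx_le] := ltP (a k) (v (emb x)).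
  by exists 0, x; rewrite mul0r add0r; split; last (right; apply: value_gap).
have eg0 : emb g != 0 by rewrite emb_eq0.
have xg0 : emb x / emb g != 0 by rewrite mulf_neq0 ?invr_neq0 ?emb_eq0.
have vxg : v (emb x / emb g) = 0.
  by rewrite (valuation_div Hv) ?emb_eq0 // vg; have := Iv_valuation x0 Ix; lia.
have vxg_ge0 : 0 <= v (emb x / emb g) by rewrite vxg.
have [c [Ec|[xc0 vxc]]] := residue_decomposition Hv Hres xg0 vxg_ge0.
- exists c, 0; rewrite addr0; split; last by left.
  by apply: emb_inj; rewrite embM -Ec mulfVK.
exists c, (x - c * g); rewrite addrC subrK; split=> //.
have Ex1 : emb (x - c * g) = (emb x / emb g - emb c) * emb g.
  by rewrite embB embM mulrBl mulfVK.
have x10 : x - c * g != 0 by rewrite -emb_eq0 Ex1 mulf_neq0.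
right; apply: value_gap => //.
by rewrite Ex1 (valuationM Hv) // vg -[X in X < _]add0r ltrD2r.
Qed.

(* If v z = -p < 0, an element of value a_n + p - 1 shows a_n - 1 = a_(n-1),
   against the minimality of n. *)
Lemma colon_Iv_valuation_ge0 n m (z : F) : conductor_index a n -> (0 < n)%N ->
  (m <= n)%N -> z != 0 -> colon (I m) z -> 0 <= v z.
Proof.
move=> [Hn Hmin] n_gt0 mn z0 Hz; rewrite leNgt; apply/negP => vz_lt0.
pose p := `|v z|%N.
have pE : p%:Z = - v z by rewrite /p abszE ltr0_norm.
have p_gt0 : (0 < p)%N by lia.
have [r r0 vr] := value_exists Ha (n + p.-1).
have [s Es] : in_R (z * emb r) by apply: Hz; right; rewrite vr (value_le Ha); lia.
have s0 : s != 0 by rewrite -emb_eq0 Es mulf_neq0 ?emb_eq0.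
have vs : v (emb s) = a n - 1.
  by rewrite Es (valuationM Hv) ?emb_eq0 // vr Hn; lia.
have [j vj] := value_attained Ha s0.
have jn : (j < n)%N by rewrite -(value_lt Ha) -vj vs; lia.
have an1 : a n.-1 = a n - 1.
  have : a j <= a n.-1 by rewrite (value_le Ha); lia.
  have : a n.-1 < a n by rewrite (value_lt Ha); lia.
  lia.
apply: (Hmin n.-1); first lia.
case=> [|k]; first by rewrite addn0 addr0.
have -> : (n.-1 + k.+1 = n + k)%N by lia.
by rewrite Hn an1; lia.
Qed.

(* Write w = c + w1 with c a unit of R and v w1 > 0: then y / w = y / c - (w1 y / c) / w
   where w1 y / c lies in R with a larger value, so iterating reaches the conductor. *)
Lemma colon_unit_in_R m (w : F) : Rbar_fin_gen R -> w != 0 -> v w = 0 ->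
  colon (I m) w -> forall y, I m y -> in_R (emb y / w).
Proof.
move=> Hfg w0 vw0 Hw; have [e He] := Rbar_conductor Hv Hfg.
have vw_ge0 : 0 <= v w by rewrite vw0.
have [c [Ec|[w10 vw1]]] := residue_decomposition Hv Hres w0 vw_ge0.
  have uc : c \is a GRing.unit.
    by apply: (valuation0_unit Hres); [rewrite -emb_eq0 -Ec | rewrite -Ec].
  by move=> y _; exists (y * c^-1); rewrite embM embV // Ec.
set w1 := w - emb c in w10 vw1.
have [c0 vc0] : emb c != 0 /\ v (emb c) = 0.
  have vNw1 : v w < v (- w1) by rewrite (valuationN Hv) // vw0.
  have := valuation_add_dominant Hv w0 (or_intror vNw1).
  by rewrite opprB addrCA subrr addr0 vw0.
have uc : c \is a GRing.unit by apply: (valuation0_unit Hres); rewrite // -emb_eq0.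
suff Hk k y : I m y -> y != 0 -> e <= v (emb y) + k%:Z -> in_R (emb y / w).
  move=> y Iy; have [->|y0] := eqVneq y 0; first by exists 0; rewrite emb0 mul0r.
  by apply: (Hk `|e - v (emb y)|%N) => //; lia.
elim: k y => [|k IHk] y Iy y0 le_e.
  apply: He; first by rewrite mulf_neq0 ?invr_neq0 ?emb_eq0.
  by rewrite (valuation_div Hv) ?emb_eq0 // vw0; lia.
have [t1 Et1] := Hw y Iy.
pose t := (t1 - c * y) * c^-1.
have Et : emb t = w1 * (emb y / emb c) by rewrite embM embB embM Et1 embV // -mulrBl mulrA.
have [t0|t0] := eqVneq t 0.
  exists (y * c^-1); rewrite (divf_perturb _ w0 c0) -/w1 -Et t0 emb0 mul0r subr0.
  by rewrite embM embV.
have vt : v (emb t) = v w1 + v (emb y).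
  have ey0 : emb y != 0 by rewrite emb_eq0.
  by rewrite Et (valuationM Hv) ?(valuation_div Hv) ?mulf_neq0 ?invr_neq0 // vc0 subr0.
have It : I m t by right; rewrite vt; have := Iv_valuation y0 Iy; lia.
have le_et : e <= v (emb t) + k%:Z by rewrite vt; lia.
have [s Es] := IHk t It t0 le_et.
exists (y * c^-1 - s).
by rewrite embB Es embM embV // [RHS](divf_perturb _ w0 c0) -/w1 -Et.
Qed.

Lemma colon_unit_Iv m (w : F) : Rbar_fin_gen R -> w != 0 -> v w = 0 ->
  colon (I m) w -> forall y, I m y -> exists2 r, I m r & emb r * w = emb y.
Proof.
move=> Hfg w0 vw0 Hw y Iy; have [r Er] := colon_unit_in_R Hfg w0 vw0 Hw Iy.
exists r; last by rewrite Er mulfVK.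
have [->|r0] := eqVneq r 0; [by left | right].
have y0 : y != 0.
  by apply: contra_neq r0 => y0; apply: emb_inj; rewrite Er y0 emb0 mul0r.
by rewrite Er (valuation_div Hv) ?emb_eq0 // vw0 subr0; apply: Iv_valuation.
Qed.
End ValuationIdeals.

(* HP is carried in the type so that instance inference finds the module structure. *)
Definition ideal_mod (R : idomainType) (P : R -> Prop) (HP : is_ideal P) : Type :=
  {x : R | P x}.

Section IdealModule.
Variables (R : idomainType) (P : R -> Prop) (HP : is_ideal P).
Local Notation M := (ideal_mod HP).

Definition ideal_val (x : M) : R := proj1_sig x.

Lemma ideal_val_inj : injective ideal_val.
Proof. by move=> [x Px] [y Py] /= xy; subst y; rewrite (Prop_irrelevance Px Py). Qed.

Definition ideal_in (x : R) (Px : P x) : M := exist _ x Px.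
Definition ideal_zero : M := ideal_in (proj1 HP).
Definition ideal_add (x y : M) : M :=
  ideal_in (proj1 (proj2 HP) _ _ (proj2_sig x) (proj2_sig y)).
Definition ideal_scale (r : R) (x : M) : M :=
  ideal_in (proj2 (proj2 HP) r _ (proj2_sig x)).

HB.instance Definition _ := gen_eqMixin M.
HB.instance Definition _ := gen_choiceMixin M.

Lemma ideal_addA : associative ideal_add.
Proof. by move=> x y z; apply: ideal_val_inj; rewrite /= addrA. Qed.
Lemma ideal_addC : commutative ideal_add.
Proof. by move=> x y; apply: ideal_val_inj; rewrite /= addrC. Qed.
Lemma ideal_add0 : left_id ideal_zero ideal_add.
Proof. by move=> x; apply: ideal_val_inj; rewrite /= add0r. Qed.
Lemma ideal_addN : left_inverse ideal_zero (ideal_scale (-1)) ideal_add.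
Proof. by move=> x; apply: ideal_val_inj; rewrite /= mulN1r addNr. Qed.

HB.instance Definition _ :=
  GRing.isZmodule.Build M ideal_addA ideal_addC ideal_add0 ideal_addN.

Lemma ideal_scaleA r s (x : M) : ideal_scale r (ideal_scale s x) = ideal_scale (r * s) x.
Proof. by apply: ideal_val_inj; rewrite /= mulrA. Qed.
Lemma ideal_scale1 : left_id 1 ideal_scale.
Proof. by move=> x; apply: ideal_val_inj; rewrite /= mul1r. Qed.
Lemma ideal_scaleDr : right_distributive ideal_scale +%R.
Proof. by move=> r x y; apply: ideal_val_inj; rewrite /= mulrDr. Qed.
Lemma ideal_scaleDl (x : M) : {morph ideal_scale^~ x : r s / r + s}.
Proof. by move=> r s; apply: ideal_val_inj; rewrite /= mulrDl. Qed.

HB.instance Definition _ := GRing.Zmodule_isLmodule.Build R M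
  ideal_scaleA ideal_scale1 ideal_scaleDr ideal_scaleDl.

Definition ideal_incl (x : M) : R^o := ideal_val x.
Lemma ideal_incl_linear : linear ideal_incl. Proof. by []. Qed.
HB.instance Definition _ := GRing.isLinear.Build R M R^o _ ideal_incl ideal_incl_linear.

(* Every linear f : P -> R is multiplication by z = f g / g, since g f(x) = f(g x) = x f(g). *)
Lemma ideal_mod_trace (g : R) : g != 0 -> P g ->
  (forall z, colon P z -> forall x, P x -> exists2 r, P r & emb r = z * emb x) ->
  set_eq P (trace_of M).
Proof.
move=> g0 Pg Hstable x; split=> [Px | [s ->]].
  by exists [:: (ideal_incl : {linear M -> R^o}, ideal_in Px)]; rewrite big_seq1.
elim: s => [|[f m] s IHs]; first by rewrite big_nil; exact: (proj1 HP).
rewrite big_cons /=; apply: (proj1 (proj2 HP)) IHs.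
pose z := @emb R (f (ideal_in Pg)) / emb g.
have eg0 : emb g != 0 by rewrite emb_eq0.
have fE y (Py : P y) : @emb R (f (ideal_in Py)) = z * emb y.
  have gyE : g *: ideal_in Py = y *: ideal_in Pg by apply: ideal_val_inj; rewrite /= mulrC.
  have := congr1 f gyE; rewrite !linearZ /= => fgy.
  apply: (mulIf eg0); rewrite /z mulrAC mulfVK // -!embM mulrC [_ * y]mulrC.
  by congr emb; exact: fgy.
have [r Pr Er] := Hstable z (fun y Py => ex_intro _ _ (fE y Py)) _ (proj2_sig m).
have -> : m = ideal_in (proj2_sig m) by apply: ideal_val_inj.
by rewrite (emb_inj (etrans (fE _ _) (esym Er))).
Qed.

End IdealModule.

Lemma ideal_mul_eq_scal (R : idomainType) (I J : R -> Prop) (q : R) :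
  is_ideal J -> I q -> (forall x y, I x -> J y -> exists2 r, J r & x * y = q * r) ->
  set_eq (ideal_mul I J) (scal_ideal q J).
Proof.
move=> [J0 [JD _]] Iq Hdiv x; split=> [[s [Hs ->]] | [y [Jy ->]]]; last first.
  by exists [:: (q, y)]; split=> [p|]; [rewrite inE => /eqP -> | rewrite big_seq1].
elim: s Hs => [|p s IHs] Hs; first by exists 0; rewrite big_nil mulr0.
have [Ip1 Jp2] := Hs p (mem_head _ _).
rewrite big_cons; have [r1 Jr1 ->] := Hdiv _ _ Ip1 Jp2.
have [r2 [Jr2 Er2]] : scal_ideal q J (\sum_(p <- s) p.1 * p.2).
  by apply: IHs => p' sp'; apply: Hs; rewrite inE sp' orbT.
by exists (r1 + r2); rewrite Er2 mulrDr; split; first exact: JD.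
Qed.

Section TraceIdeals.
Variables (R : idomainType) (v : {fraction R} -> int) (a : nat -> int) (i : nat) (q q' : R).
Hypothesis Hv : normalized_valuation_of_Rbar v.
Hypothesis Hres : residue_iso v.
Hypothesis Ha : value_enum v a.
Hypothesis Hfg : Rbar_fin_gen R.
Hypotheses (q0 : q != 0) (vq : v (emb q) = a i).
Hypotheses (q'0 : q' != 0) (vq' : v (emb q') = a i.+1).
Hypothesis HB :
  set_eq (ideal_mul (Iv v a i.+1) (Iv v a i.+3)) (scal_ideal q' (Iv v a i.+3)).
Local Notation F := {fraction R}.
Local Notation I := (Iv v a).

Lemma Iv_mul_scal x y : I i.+1 x -> I i.+3 y -> exists2 y', I i.+3 y' & x * y = q' * y'.
Proof.
move=> Ix Iy.
have /(HB (x * y)).1 [y' [Iy' ->]] : ideal_mul (I i.+1) (I i.+3) (x * y).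
  by exists [:: (x, y)]; split=> [p|]; [rewrite inE => /eqP -> | rewrite big_seq1].
by exists y'.
Qed.

Section Obstruction.
Variables (g h : R) (z : F).
Hypotheses (g0 : g != 0) (vg : v (emb g) = a i).
Hypotheses (z0 : z != 0) (vz_gt0 : 0 < v z) (Hz : colon (I i.+2) z).
Hypotheses (Eh : emb h = z * emb g) (vh : v (emb h) = a i.+1).

Lemma obstruction_dvd x y : I i.+1 x -> I i.+2 y -> exists p, x * y = g * p.
Proof.
move=> Ix Iy; have [->|y0] := eqVneq y 0; first by exists 0; rewrite !mulr0.
have [p1 Ep1] := Hz Iy.
have Ip1 : I i.+3 p1.
  have p10 : p1 != 0 by rewrite -emb_eq0 Ep1 mulf_neq0 ?emb_eq0.
  right; apply: (value_gap Ha) => //; rewrite Ep1 (valuationM Hv) ?emb_eq0 //.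
  by have := Iv_valuation y0 Iy; lia.
have eq'0 : emb q' != 0 by rewrite emb_eq0.
have eh0 : emb h != 0 by rewrite Eh mulf_neq0 ?emb_eq0.
have w0 : emb h / emb q' != 0 by rewrite mulf_neq0 ?invr_neq0.
have vw0 : v (emb h / emb q') = 0 by rewrite (valuation_div Hv) // vh vq' subrr.
have Hw : colon (I i.+3) (emb h / emb q').
  move=> y' Iy'; have Ih : I i.+1 h by right; rewrite vh.
  have [y'' _ Ey''] := Iv_mul_scal Ih Iy'.
  by exists y''; rewrite mulrAC -embM Ey'' embM [emb q' * _]mulrC mulfK.
have [p2 Ip2 Ep2] := colon_unit_Iv Hv Hres Hfg w0 vw0 Hw Ip1.
have p2g : p2 * g = y * q'.
  apply: emb_inj; apply: (mulfI z0); rewrite !embM mulrCA -Eh [RHS]mulrA -Ep1 -Ep2.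
  by rewrite -mulrA mulfVK.
have [p3 _ Ep3] := Iv_mul_scal Ix Ip2.
exists p3; apply: (mulIf q'0).
by rewrite -mulrA -p2g mulrA Ep3; ring.
Qed.

Lemma obstruction_dvd_Iv x y : I i x -> I i.+2 y -> exists2 p, I i.+2 p & x * y = g * p.
Proof.
move=> Ix Iy; have [u [x1 [Ex Ix1]]] := Iv_split Hv Hres Ha g0 vg Ix.
have [p1 Ep1] := obstruction_dvd Ix1 Iy.
have Exy : x * y = g * (u * y + p1) by rewrite Ex mulrDl Ep1 mulrDr mulrCA mulrA.
exists (u * y + p1) => //; have [->|p0] := eqVneq (u * y + p1) 0; [by left | right].
have x0 : x != 0 by apply: contra_neq p0 => x0; apply: (mulfI g0); rewrite -Exy x0 !mul0r mulr0.
have y0 : y != 0 by apply: contra_neq p0 => y0; apply: (mulfI g0); rewrite -Exy y0 !mulr0.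
have := congr1 (v \o @emb R) Exy; rewrite /= !embM !(valuationM Hv) ?emb_eq0 // vg.
by have := Iv_valuation x0 Ix; have := Iv_valuation y0 Iy; lia.
Qed.

Lemma obstruction_Iv_mul : set_eq (ideal_mul (I i) (I i.+2)) (scal_ideal q (I i.+2)).
Proof.
have eg0 : emb g != 0 by rewrite emb_eq0.
have w0 : emb q / emb g != 0 by rewrite mulf_neq0 ?invr_neq0 ?emb_eq0.
have vw0 : v (emb q / emb g) = 0 by rewrite (valuation_div Hv) ?emb_eq0 // vq vg subrr.
have Iq : I i q by right; rewrite vq.
have Hw : colon (I i.+2) (emb q / emb g).
  move=> y Iy; have [p _ Ep] := obstruction_dvd_Iv Iq Iy.
  by exists p; rewrite mulrAC -embM Ep embM [emb g * _]mulrC mulfK.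
apply: ideal_mul_eq_scal => // [|x y Ix Iy]; first exact: Iv_ideal.
have [p Ip Ep] := obstruction_dvd_Iv Ix Iy.
have [r Ir Er] := colon_unit_Iv Hv Hres Hfg w0 vw0 Hw Ip.
exists r => //; apply: emb_inj.
by rewrite Ep !embM -Er mulrCA [X in _ * X]mulrCA divff // mulr1 mulrC.
Qed.
End Obstruction.

Hypothesis HA :
  ~ set_eq (ideal_mul (Iv v a i) (Iv v a i.+2)) (scal_ideal q (Iv v a i.+2)).
Local Notation J al := (gen_plus (q + al * q') (I i.+2)).

Lemma J_gen_valuation al : q + al * q' != 0 /\ v (emb (q + al * q')) = a i.
Proof.
have eq0 : emb q != 0 by rewrite emb_eq0.
have vaq' : emb (al * q') = 0 \/ v (emb q) < v (emb (al * q')).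
  have [->|al0] := eqVneq al 0; [by left; rewrite mul0r emb0 | right].
  rewrite embM (valuationM Hv) ?emb_eq0 // vq vq'.
  by have := valuation_emb_ge0 Hv al0; have := proj1 Ha i; lia.
by rewrite -emb_eq0 embD -vq; apply: valuation_add_dominant.
Qed.

Lemma J_ideal al : is_ideal (J al).
Proof. exact/gen_plus_ideal/Iv_ideal. Qed.

Lemma J_gen al : J al (q + al * q').
Proof. by exists 1, 0; rewrite mul1r addr0; split; first left. Qed.

Lemma Iv_sub_J al y : I i.+2 y -> J al y.
Proof. by exists 0, y; rewrite mul0r add0r. Qed.

Lemma lincomb_Iv_nonunit s u y : s * q + u * q' = y -> I i.+2 y -> s \isn't a GRing.unit.
Proof.
move=> Ey Iy; apply/negP => /(unit_valuation Hv Hres) [s0 vs0].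
have sq0 : emb (s * q) != 0 by rewrite emb_eq0 mulf_neq0.
have vuq' : emb (u * q') = 0 \/ v (emb (s * q)) < v (emb (u * q')).
  have [->|u0] := eqVneq u 0; [by left; rewrite mul0r emb0 | right].
  rewrite !embM !(valuationM Hv) ?emb_eq0 // vs0 vq vq' add0r.
  by have := valuation_emb_ge0 Hv u0; have := proj1 Ha i; lia.
have [y0 vy] := valuation_add_dominant Hv sq0 vuq'.
rewrite -embD Ey emb_eq0 in y0; rewrite -embD Ey in vy.
have := Iv_valuation y0 Iy; rewrite vy embM (valuationM Hv) ?emb_eq0 // vs0 vq add0r.
by have := proj1 Ha i; have := proj1 Ha i.+1; lia.
Qed.

Hypothesis Hloc : is_local R.

Lemma J_not_sub al be : ~ max_ideal (al - be) -> ~ set_sub (J be) (J al).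
Proof.
move=> al_be Hsub; have [r [y [Iy E]]] := Hsub _ (J_gen be).
have Ey : (1 - r) * q + (be - r * al) * q' = y.
  by apply: (addrI (r * (q + al * q'))); rewrite -E; ring.
have Eal : al - be = (-1) * ((be - r * al) + (-1) * (al * (1 - r))) by ring.
move: (1 - r) (be - r * al) Ey Eal => s u Ey Eal.
have s_nunit := lincomb_Iv_nonunit Ey Iy.
have u_unit : u \is a GRing.unit.
  apply/negPn/negP => u_nunit; apply: al_be; have [_ [mD mM]] := Hloc.
  by rewrite Eal; apply/mM/mD => //; apply/mM/mM.
have [u0 vu] := unit_valuation Hv Hres u_unit.
have [sq0 vsq] : emb (s * q) != 0 /\ v (emb (s * q)) = a i.+1.
  have uq'0 : emb (- (u * q')) != 0 by rewrite emb_eq0 oppr_eq0 mulf_neq0.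
  have vuq' : v (emb (- (u * q'))) = a i.+1.
    rewrite embN (valuationN Hv) ?emb_eq0 ?mulf_neq0 // embM.
    by rewrite (valuationM Hv) ?emb_eq0 // vu vq' add0r.
  have vy : emb y = 0 \/ v (emb (- (u * q'))) < v (emb y).
    have [->|y0] := eqVneq y 0; [by left; rewrite emb0 | right].
    by rewrite vuq'; exact: lt_le_trans (proj1 Ha _) (Iv_valuation y0 Iy).
  have -> : s * q = - (u * q') + y by rewrite -Ey addrC addrK.
  by rewrite embD -vuq'; apply: valuation_add_dominant.
have s0 : s != 0 by apply: contraNneq sq0 => ->; rewrite mul0r emb0.
have es0 : emb s != 0 by rewrite emb_eq0.
have vs_gt0 : 0 < v (emb s).
  by move: vsq; rewrite embM (valuationM Hv) ?emb_eq0 // vq; have := proj1 Ha i; lia.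
apply: HA; apply: (obstruction_Iv_mul q0 vq es0 vs_gt0 _ (embM s q) vsq).
by move=> y' _; exists (s * y'); rewrite embM.
Qed.

Variable n : nat.
Hypotheses (Hn : conductor_index a n) (i_n : (i.+2 <= n)%N).

Lemma colon_J_gen al (z : F) : z != 0 -> 0 <= v z -> colon (J al) z ->
  exists2 t, J al t & emb t = z * emb (q + al * q').
Proof.
set g := q + al * q'; have [g0 vg] := J_gen_valuation al.
move=> z0 vz Hz; have [c [Ec|[z10 vz1]]] := residue_decomposition Hv Hres z0 vz.
  by exists (c * g); [exists c, 0; rewrite addr0; split; first left | rewrite embM Ec].
have [t1 Et1] := Hz _ (J_gen al).
pose p := t1 - c * g.
have Ep : emb p = (z - emb c) * emb g by rewrite embB embM Et1 mulrBl.
have p0 : p != 0 by rewrite -emb_eq0 Ep mulf_neq0 ?emb_eq0.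
have vp : a i.+1 <= v (emb p).
  apply: (value_gap Ha) => //; rewrite Ep (valuationM Hv) ?emb_eq0 // vg; lia.
have [vp_gt|vp_le] := ltP (a i.+1) (v (emb p)).
  exists (c * g + p); first by exists c, p; split=> //; right; apply: (value_gap Ha).
  by rewrite embD embM Ep -mulrDl addrC subrK.
exfalso; apply: HA; apply: (obstruction_Iv_mul g0 vg z10 vz1 _ Ep).
- move=> y Iy; have [t3 Et3] := Hz _ (Iv_sub_J al Iy).
  by exists (t3 - c * y); rewrite embB embM Et3 mulrBl.
- by apply/eqP; rewrite eq_le vp vp_le.
Qed.

Lemma colon_J_stable al (z : F) : colon (J al) z ->
  forall x, J al x -> exists2 r, J al r & emb r = z * emb x.
Proof.
move=> Hz x [r [y [Iy ->]]]; have [JD JM] := proj2 (J_ideal al).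
have [->|z0] := eqVneq z 0.
  by exists 0; [exact: (proj1 (J_ideal al)) | rewrite emb0 mul0r].
have vz : 0 <= v z.
  apply: (colon_Iv_valuation_ge0 Hv Ha Hn _ i_n z0) => [|y' Iy']; first lia.
  exact/Hz/Iv_sub_J.
have [t Jt Et] := colon_J_gen z0 vz Hz.
have [t2 Et2] := Hz _ (Iv_sub_J al Iy).
exists (r * t + t2); first apply: JD (JM _ _ Jt) (Iv_sub_J al _).
  have [->|t20] := eqVneq t2 0; [by left | right].
  have y0 : y != 0 by apply: contra_neq t20 => y0; apply: emb_inj; rewrite Et2 y0 emb0 mulr0.
  rewrite Et2 (valuationM Hv) ?emb_eq0 //.
  by have := Iv_valuation y0 Iy; lia.
by rewrite !embD !embM Et Et2 mulrDr mulrCA.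
Qed.

Lemma J_trace al : in_TR (J al).
Proof.
have [g0 _] := J_gen_valuation al.
split; first by exists (q + al * q'); split; first exact: J_gen.
exists (ideal_mod (J_ideal al)).
exact: ideal_mod_trace g0 (J_gen al) (@colon_J_stable al).
Qed.

End TraceIdeals.

Theorem proposition3p6 (R : idomainType) (v : {fraction R} -> int)
  (a : nat -> int) (n i : nat) (q q' : R) :
  noetherian R -> krull_dim_one R -> is_local R ->
  Rbar_fin_gen R ->
  normalized_valuation_of_Rbar v ->
  residue_iso v ->
  value_enum v a ->
  conductor_index a n ->
  (4 <= n)%N -> (1 <= i)%N -> (i <= n - 3)%N ->
  q != 0 -> v (emb q) = a i ->
  q' != 0 -> v (emb q') = a i.+1 ->
  ~ set_eq (ideal_mul (Iv v a i) (Iv v a i.+2)) (scal_ideal q (Iv v a i.+2)) ->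
  set_eq (ideal_mul (Iv v a i.+1) (Iv v a i.+3)) (scal_ideal q' (Iv v a i.+3)) ->
  (forall alpha : R, in_TR (gen_plus (q + alpha * q') (Iv v a i.+2))) /\
  (forall alpha beta : R, ~ max_ideal (alpha - beta) ->
     ~ set_sub (gen_plus (q + beta * q') (Iv v a i.+2))
               (gen_plus (q + alpha * q') (Iv v a i.+2))) /\
  (residue_field_infinite R -> TR_infinite R).
Proof.
move=> _ _ Hloc Hfg Hv Hres Ha Hn n4 _ i3 q0 vq q'0 vq' HA HB.
have i_n : (i.+2 <= n)%N by lia.
have J_tr := J_trace Hv Hres Ha Hfg q0 vq q'0 vq' HB HA Hn i_n.
have J_ns := J_not_sub Hv Hres Ha Hfg q0 vq q'0 vq' HB HA Hloc.
split=> //; split=> // -[f Hf].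
exists (fun j => gen_plus (q + f j * q') (Iv v a i.+2)); split=> // j l jl EJ.
by apply: J_ns (Hf j l jl) _ => x /EJ.
Qed.
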